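(* Let $P$ be a Poisson bracket on $\mathbb{R}^n$ and let $\odot_\nu$ be the sun-product associated with a star-product on $(\mathbb{R}^n,P)$, extended to $\mathsf{N}_\nu$ via its differential cochains. Then $\odot_\nu$ is weakly trivial: there exists an $\mathbb{R}[[\nu]]$-linear map $S_\nu=\sum_{r\ge0}\nu^rS_r:\mathsf{N}_\nu\to\mathsf{N}_\nu$ with $S_0=I$ and each $S_r$ ($r\ge1$) a differential operator on $\mathsf{N}$, such that $S_\nu(f\odot_\nu g)=fg$ for all $f,g\in\mathsf{N}$.
   Context: $\mathsf{N}=C^\infty(\mathbb{R}^n)$, coordinates $x_1,\dots,x_n$, $\mathsf{Pol}=\mathbb{R}[x_1,\dots,x_n]$, $\mathsf{N}_\nu=\mathsf{N}[[\nu]]$, $\pi:\mathsf{N}_\nu\to\mathsf{N}$ the projection onto the $\nu^0$-coefficient. A (differential) star-product on $(\mathbb{R}^n,P)$ is a bilinear map $f\ast_\nu g=\sum_{r\ge0}\nu^rC_r(f,g)$ from $\mathsf{N}\times\mathsf{N}$ to $\mathsf{N}[[\nu]]$, extended $\mathbb{R}[[\nu]]$-bilinearly, with bidifferential $C_r$ satisfying: $C_0(f,g)=fg$; $C_r(c,f)=C_r(f,c)=0$ for $r\ge1$, $c$ constant; associativity $\sum_{s+t=r}C_s(C_t(f,g),h)=\sum_{s+t=r}C_s(f,C_t(g,h))$; $C_1(f,g)-C_1(g,f)=2P(f,g)$. Its sun-product cochains $\rho_r:\mathsf{Pol}\to\mathsf{N}$ are determined by $\rho(1)=1$ and $\rho(x_{i_1}\cdots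 x_{i_k})=\frac1{k!}\sum_{\sigma\in S_k}x_{i_{\sigma(1)}}\ast_\nu\cdots\ast_\nu x_{i_{\sigma(k)}}=\sum_r\nu^r\rho_r(x_{i_1}\cdots x_{i_k})$, with $\rho_0$ the identity; the sun-product on polynomial data is $f\odot_\nu g=\rho(\pi(fg))$. Each $\rho_r$ is the restriction to $\mathsf{Pol}$ of a unique differential operator on $\mathsf{N}$ (still denoted $\rho_r$), and the sun-product is extended to $\mathsf{N}_\nu$ by $f\odot_\nu g=\pi(fg)+\sum_{r\ge1}\nu^r\rho_r(\pi(fg))$. *)

From HB Require Import structures.
From mathcomp Require Import all_boot all_order all_algebra all_fingroup.
From mathcomp Require Import all_classical all_reals all_analysis.
Set Implicit Arguments. Unset Strict Implicit. Unset Printing Implicit Defensive.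
Import Order.TTheory GRing.Theory Num.Theory.
Import numFieldNormedType.Exports.
Local Open Scope ring_scope.

Section SunDefs.
Variables (R : realType) (n : nat).

Local Notation V := 'rV[R]_n.
(* N = C^oo(R^n), as functions V -> R satisfying [smooth] *)
Local Notation fn := (V -> R).

Definition basisv (i : 'I_n) : V := \row_(j < n) (i == j)%:R.

Definition partial (i : 'I_n) (f : fn) : fn := fun x => derive f x (basisv i).

Definition iter_partial (s : seq 'I_n) (f : fn) : fn := foldr partial f s.

Definition smooth (f : fn) : Prop :=
  forall (s : seq 'I_n) (x : V), differentiable (iter_partial s f) x.

Definition coordf (i : 'I_n) : fn := fun x => x ord0 i.
Definition cstf (c : R) : fn := fun _ => c.
Definition mulfn (f g : fn) : fn := fun x => f x * g x.

Definition is_diffop (D : fn -> fn) : Prop :=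
  exists l : seq (fn * seq 'I_n),
    (forall p, p \in l -> smooth p.1) /\
    forall f, smooth f ->
      D f = fun x => \sum_(p <- l) p.1 x * iter_partial p.2 f x.

Definition is_bidiffop (C : fn -> fn -> fn) : Prop :=
  exists l : seq (fn * seq 'I_n * seq 'I_n),
    (forall p, p \in l -> smooth p.1.1) /\
    forall f g, smooth f -> smooth g ->
      C f g = fun x => \sum_(p <- l)
                 p.1.1 x * iter_partial p.1.2 f x * iter_partial p.2 g x.

Definition poisson_bracket (P : fn -> fn -> fn) : Prop :=
  [/\ (forall f g, smooth f -> smooth g -> smooth (P f g)),
      (forall a f h g, smooth f -> smooth h -> smooth g ->
         P (fun x => a * f x + h x) g = fun x => a * P f g x + P h g x),
      (forall f g, smooth f -> smooth g -> P f g = fun x => - P g f x),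
      (forall f h g, smooth f -> smooth h -> smooth g ->
         P (mulfn f h) g = fun x => f x * P h g x + h x * P f g x) &
      (forall f g h, smooth f -> smooth g -> smooth h ->
         forall x, P f (P g h) x + P g (P h f) x + P h (P f g) x = 0)].

Definition star_product (P : fn -> fn -> fn) (C : nat -> fn -> fn -> fn) : Prop :=
  [/\ (forall r, is_bidiffop (C r)),
      (forall f g, smooth f -> smooth g -> C 0%N f g = mulfn f g),
      (forall r c f, (1 <= r)%N -> smooth f ->
         C r (cstf c) f = cstf 0 /\ C r f (cstf c) = cstf 0),
      (forall r f g h, smooth f -> smooth g -> smooth h ->
         forall x, \sum_(s < r.+1) C s (C (r - s)%N f g) h x
                 = \sum_(s < r.+1) C s f (C (r - s)%N g h) x) &
      (forall f g, smooth f -> smooth g ->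
         forall x, C 1%N f g x - C 1%N g f x = 2 * P f g x)].

(* formal power series N[[nu]] : the r-th coefficient is F r *)
Definition fps := nat -> fn.

Definition embF (f : fn) : fps := fun r => if r == 0%N then f else cstf 0.

Definition starF (C : nat -> fn -> fn -> fn) (F G : fps) : fps :=
  fun r x => \sum_(s < r.+1) \sum_(a < (r - s).+1)
               C s (F a) (G (r - s - a)%N) x.

Definition star_list (C : nat -> fn -> fn -> fn) (s : seq 'I_n) : fps :=
  foldr (fun i acc => starF C (embF (coordf i)) acc) (embF (cstf 1)) s.

Definition monomial k (t : k.-tuple 'I_n) : fn :=
  fun x => \prod_(j < k) x ord0 (tnth t j).

Definition rho_mono (C : nat -> fn -> fn -> fn) k (t : k.-tuple 'I_n) : fps :=
  fun r x => (k`!%:R)^-1 *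
    \sum_(sigma : 'S_k) star_list C [seq tnth t (sigma j) | j <- enum 'I_k] r x.

(* rho r is a differential operator on N whose restriction to Pol is the
   sun-product cochain rho_r *)
Definition sun_cochains (C : nat -> fn -> fn -> fn) (rho : nat -> fn -> fn) : Prop :=
  forall r, is_diffop (rho r) /\
    forall k (t : k.-tuple 'I_n), rho r (monomial t) = rho_mono C t r.

Definition piF (F : fps) : fn := F 0%N.

Definition sunF (rho : nat -> fn -> fn) (F G : fps) : fps :=
  fun r => if r == 0%N then mulfn (piF F) (piF G) else rho r (mulfn (piF F) (piF G)).

Definition applyS (S : nat -> fn -> fn) (F : fps) : fps :=
  fun r x => \sum_(s < r.+1) S s (F (r - s)%N) x.

End SunDefs.

(* The cochains assemble into the operator series rho_nu = I + sum_(r >= 1) nu^r rho_r, and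
   f (.) g = rho_nu (f g).  A series of maps with identity constant term has a formal left
   inverse S_nu, given by S_0 = I and S_(r+1) = - sum_(t <= r) S_t o rho_(r+1-t); by induction
   each S_r is built from the rho_r by sums and composites, hence is a differential operator,
   and S_nu (f (.) g) = S_nu (rho_nu (f g)) = f g. *)

From HB Require Import structures.
From mathcomp Require Import all_boot all_order all_algebra all_fingroup.
From mathcomp Require Import all_classical all_reals all_analysis.
Import Order.TTheory GRing.Theory Num.Theory.
Import numFieldNormedType.Exports.
Local Open Scope ring_scope.
Set Implicit Arguments. Unset Strict Implicit.

Section Smooth.
Variables (R : realType) (n : nat).
Local Notation fn := ('rV[R]_n -> R).
Implicit Types (f g : fn) (i : 'I_n) (s : seq 'I_n).

Lemma partialD i f g : (forall x, differentiable f x) -> (forall x, differentiable g x) ->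
  partial i (f + g) = partial i f + partial i g.
Proof. by move=> df dg; apply/funext => x; apply: deriveD; exact: diff_derivable. Qed.

Lemma partialM i f g : (forall x, differentiable f x) -> (forall x, differentiable g x) ->
  partial i (f * g) = partial i f * g + f * partial i g.
Proof.
move=> df dg; apply/funext => x.
rewrite /partial deriveM; [|exact: diff_derivable..].
by rewrite addrC /GRing.scale /= mulrC.
Qed.

Lemma partial_cst i (c : R) : partial i (cst c) = 0.
Proof. by apply/funext => x; exact: derive_cst. Qed.

Lemma partial_sum i (I : Type) (r : seq I) (P : pred I) (F : I -> fn) :
  (forall j, P j -> forall x, differentiable (F j) x) ->
  partial i (\sum_(j <- r | P j) F j) = \sum_(j <- r | P j) partial i (F j).
Proof.
move=> dF.
suff [] : (forall x, differentiable (\sum_(j <- r | P j) F j) x) /\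
          partial i (\sum_(j <- r | P j) F j) = \sum_(j <- r | P j) partial i (F j) by [].
apply: (big_rec2 (fun y1 y2 => (forall x, differentiable y1 x) /\ partial i y1 = y2)).
  by split=> [x|]; [exact: (differentiable_cst (0 : R)) | apply/funext => x; exact: derive_cst].
move=> j y1 y2 Pj [dy1 <-]; split=> [x|]; first exact: differentiableD (dF j Pj x) (dy1 x).
by rewrite partialD //; exact: dF.
Qed.

Lemma smooth_iter_partial s f : smooth f -> smooth (iter_partial s f).
Proof. by move=> sf t x; rewrite /iter_partial -foldr_cat; exact: sf. Qed.

Lemma smooth_cst (c : R) : smooth (cst c : fn).
Proof.
move=> s x; have [c' ->] : exists c', iter_partial s (cst c : fn) = cst c'.
  by elim: s => [|i s [c' IH]]; [exists c | exists 0; rewrite /= IH partial_cst].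
exact: differentiable_cst.
Qed.

Lemma iter_partialD s f g : smooth f -> smooth g ->
  iter_partial s (f + g) = iter_partial s f + iter_partial s g.
Proof.
move=> sf sg; elim: s => [//|i s /= ->].
by apply: partialD => x; [exact: sf | exact: sg].
Qed.

Lemma smoothD f g : smooth f -> smooth g -> smooth (f + g).
Proof.
by move=> sf sg s x; rewrite iter_partialD //; exact: differentiableD (sf s x) (sg s x).
Qed.

Lemma smooth_sum (I : Type) (r : seq I) (P : pred I) (F : I -> fn) :
  (forall j, P j -> smooth (F j)) -> smooth (\sum_(j <- r | P j) F j).
Proof. by move=> sF; apply: big_ind => //; [exact: smooth_cst | exact: smoothD]. Qed.

Lemma iter_partialM s f g : smooth f -> smooth g ->
  exists l : seq (seq 'I_n * seq 'I_n),
    iter_partial s (f * g) = \sum_(p <- l) iter_partial p.1 f * iter_partial p.2 g.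
Proof.
move=> sf sg; elim: s => [|i s [l IH]]; first by exists [:: ([::], [::])]; rewrite big_seq1.
exists ([seq (i :: p.1, p.2) | p <- l] ++ [seq (p.1, i :: p.2) | p <- l]).
rewrite /= IH partial_sum => [|p _ x]; last by apply: differentiableM; [exact: sf | exact: sg].
rewrite big_cat !big_map /= -big_split /=; apply: eq_bigr => p _.
by apply: partialM => x; [exact: sf | exact: sg].
Qed.

Lemma smoothM f g : smooth f -> smooth g -> smooth (f * g).
Proof.
move=> sf sg s x; have [l ->] := iter_partialM s sf sg.
apply: (big_ind (fun h => differentiable h x)) => [|h1 h2|p _].
- exact: (differentiable_cst (0 : R)).
- exact: differentiableD.
- by apply: differentiableM; [exact: sf | exact: sg].
Qed.

End Smooth.

Section SeriesInverse.
Variables (V : zmodType) (rho : nat -> V -> V).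

(* [inv_upto r]
   tabulates the first r+1 coefficients, so that the recursion may call all earlier ones. *)
Fixpoint inv_upto (r : nat) : nat -> V -> V :=
  if r is r'.+1 then fun s =>
    if s == r'.+1 then - \sum_(t < r'.+1) (inv_upto r' t \o rho (r'.+1 - t))
    else inv_upto r' s
  else fun=> id.

Definition series_inv (r : nat) : V -> V := inv_upto r r.

Lemma inv_uptoE r s : (s <= r)%N -> inv_upto r s = series_inv s.
Proof.
elim: r => [|r IH]; first by rewrite leqn0 => /eqP ->.
by rewrite leq_eqVlt ltnS => /predU1P [-> //| sr] /=; rewrite ltn_eqF ?IH.
Qed.

Lemma series_invS r :
  series_inv r.+1 = - \sum_(t < r.+1) (series_inv t \o rho (r.+1 - t)).
Proof.
rewrite /series_inv /= eqxx; congr (- _); apply: eq_bigr => t _.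
by rewrite inv_uptoE // -ltnS.
Qed.

Lemma series_invK r h :
  \sum_(t < r.+1) series_inv t (if (r - t == 0)%N then h else rho (r - t) h)
  = if r == 0%N then h else 0.
Proof.
case: r => [|r]; first by rewrite big_ord1.
rewrite big_ord_recr /= subnn eqxx series_invS /= fct_sumE opprfctE /=.
by rewrite -sumrB big1 // => t _; rewrite subn_eq0 leqNgt ltn_ord subrr.
Qed.

End SeriesInverse.

Section DifferentialOperators.
Variables (R : realType) (n : nat).
Local Notation fn := ('rV[R]_n -> R).
Implicit Types (f : fn) (D : fn -> fn).

Lemma diffop_expansion D : is_diffop D ->
  exists2 l : seq (fn * seq 'I_n), (forall p, p \in l -> smooth p.1) &
    forall f, smooth f -> D f = \sum_(p <- l) p.1 * iter_partial p.2 f.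
Proof. by case=> l [sl eD]; exists l => // f sf; rewrite eD // fct_sumE. Qed.

Lemma diffop_ext D D' : is_diffop D' -> (forall f, smooth f -> D f = D' f) -> is_diffop D.
Proof. by move=> [l [sl eD']] eD; exists l; split => // f sf; rewrite eD // eD'. Qed.

Lemma diffop_smooth D f : is_diffop D -> smooth f -> smooth (D f).
Proof.
move=> /diffop_expansion [l sl eD] sf; rewrite eD // big_seq.
by apply: smooth_sum => p pl; apply: smoothM; [exact: sl | exact: smooth_iter_partial].
Qed.

Lemma diffop_monomial (a : fn) (s : seq 'I_n) :
  smooth a -> is_diffop (fun f => a * iter_partial s f).
Proof.
move=> sa; exists [:: (a, s)]; split; first by move=> p; rewrite mem_seq1 => /eqP ->.
by move=> f _; apply/funext => x; rewrite big_seq1.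
Qed.

Lemma diffop_id : is_diffop (@id fn).
Proof.
apply: (diffop_ext (diffop_monomial [::] (smooth_cst 1))) => f _.
by apply/funext => x; rewrite /= mul1r.
Qed.

Lemma diffopD D1 D2 : is_diffop D1 -> is_diffop D2 -> is_diffop (D1 + D2).
Proof.
move=> [l1 [sl1 eD1]] [l2 [sl2 eD2]]; exists (l1 ++ l2); split.
  by move=> p; rewrite mem_cat => /orP [/sl1|/sl2].
move=> f sf; rewrite [(D1 + D2) f]/(D1 f + D2 f) eD1 // eD2 //.
by apply/funext => x; rewrite big_cat.
Qed.

Lemma diffop_sum (I : Type) (r : seq I) (P : pred I) (D : I -> fn -> fn) :
  (forall j, P j -> is_diffop (D j)) -> is_diffop (\sum_(j <- r | P j) D j).
Proof.
move=> dD; apply: big_ind => //; last exact: diffopD.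
by exists [::]; split => // f _; apply/funext => x; rewrite big_nil.
Qed.

Lemma diffop_mull (a : fn) D : smooth a -> is_diffop D -> is_diffop (fun f => a * D f).
Proof.
move=> sa /diffop_expansion [l sl eD].
pose M p := fun f => (a * p.1) * iter_partial p.2 f.
have dM : is_diffop (\sum_(p <- l | p \in l) M p).
  by apply: diffop_sum => p pl; apply: diffop_monomial; apply: smoothM => //; exact: sl.
apply: (diffop_ext dM).
move=> f sf; rewrite eD // fct_sumE -big_seq mulr_sumr.
by apply: eq_bigr => p _; rewrite mulrA.
Qed.

Lemma diffopN D : is_diffop D -> is_diffop (- D).
Proof.
move=> dD; apply: (diffop_ext (diffop_mull (smooth_cst (-1)) dD)) => f _.
by apply/funext => x; rewrite /= mulN1r.
Qed.

Lemma diffop_partial i D : is_diffop D -> is_diffop (fun f => partial i (D f)).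
Proof.
move=> /diffop_expansion [l sl eD].
pose M p := fun f => partial i p.1 * iter_partial p.2 f + p.1 * iter_partial (i :: p.2) f.
have dM : is_diffop (\sum_(p <- l | p \in l) M p).
  apply: diffop_sum => p pl; apply: diffopD; apply: diffop_monomial; last exact: sl.
  exact: (smooth_iter_partial [:: i] (sl p pl)).
apply: (diffop_ext dM).
move=> f sf; rewrite fct_sumE /= eD // big_seq partial_sum; last first.
  by move=> p pl x; apply: differentiableM; [exact: (sl p pl [::]) | exact: sf].
by apply: eq_bigr => p pl; rewrite partialM // => x; exact: (sl p pl [::]).
Qed.

Lemma diffop_iter_partial s D : is_diffop D -> is_diffop (fun f => iter_partial s (D f)).
Proof. by move=> dD; elim: s => [|i s IH] /=; [exact: dD | exact: diffop_partial]. Qed.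

Lemma diffop_comp D1 D2 : is_diffop D1 -> is_diffop D2 -> is_diffop (D1 \o D2).
Proof.
move=> /diffop_expansion [l sl eD1] dD2.
pose M p := fun f => p.1 * iter_partial p.2 (D2 f).
have dM : is_diffop (\sum_(p <- l | p \in l) M p).
  by apply: diffop_sum => p pl; apply: diffop_mull; [exact: sl | exact: diffop_iter_partial].
apply: (diffop_ext dM).
move=> f sf; rewrite fct_sumE /= -big_seq eD1 //; exact: diffop_smooth.
Qed.

Lemma diffop_series_inv (rho : nat -> fn -> fn) :
  (forall r, is_diffop (rho r.+1)) -> forall r, is_diffop (series_inv rho r).
Proof.
move=> drho; elim/ltn_ind => -[_|r IH]; first exact: diffop_id.
rewrite series_invS; apply/diffopN/diffop_sum => t _.
apply: diffop_comp; first exact: IH.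
by rewrite subSn ?drho // -ltnS.
Qed.

End DifferentialOperators.

Unset Implicit Arguments.

Theorem corollary4 (R : realType) (n : nat)
  (P : ('rV[R]_n -> R) -> ('rV[R]_n -> R) -> ('rV[R]_n -> R))
  (C : nat -> ('rV[R]_n -> R) -> ('rV[R]_n -> R) -> ('rV[R]_n -> R))
  (rho : nat -> ('rV[R]_n -> R) -> ('rV[R]_n -> R)) :
  poisson_bracket P ->
  star_product P C ->
  sun_cochains C rho ->
  exists S : nat -> ('rV[R]_n -> R) -> ('rV[R]_n -> R),
    [/\ (forall f, smooth f -> S 0%N f = f),
        (forall r, (1 <= r)%N -> is_diffop (S r)) &
        (forall f g, smooth f -> smooth g ->
           applyS S (sunF rho (embF f) (embF g)) = embF (mulfn f g))].
Proof.
move=> _ _ rho_cochains; exists (series_inv rho); split.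
- by [].
- by move=> r _; apply: diffop_series_inv => k; exact: (rho_cochains k.+1).1.
- move=> f g _ _; apply/funext => r; apply/funext => x.
  have /(congr1 (fun h => h x)) := series_invK rho r (mulfn f g).
  by rewrite fct_sumE /applyS /sunF /embF /= => ->; case: r.
Qed.
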